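(* Suppose $(A,V,B)$ satisfies Schur-Weyl duality and $e,f\in B$ are idempotents with $Ve\neq0$, $ef=f$ and $fe=e$. Then the following are equivalent: (1) $(A,Ve,eBe)$ satisfies Schur-Weyl duality; (2) every $eBe$-linear endomorphism of $Ve$ extends to a $B$-linear endomorphism of $V$; (3) $(A,Vf,fBf)$ satisfies Schur-Weyl duality; (4) every $fBf$-linear endomorphism of $Vf$ extends to a $B$-linear endomorphism of $V$.
   Context: $k$ is a field, $A,B$ are $k$-algebras, $V$ an $(A,B)$-bimodule. $(A,V,B)$ satisfies Schur-Weyl duality if the image of $A$ in $\operatorname{End}_k(V)$ (via $a\mapsto(v\mapsto av)$) equals $\operatorname{End}_B(V)$ and the image of $B$ (via $b\mapsto(v\mapsto vb)$) equals $\operatorname{End}_A(V)$. For an idempotent $e$, $Ve$ is an $(A,eBe)$-bimodule. *)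

From HB Require Import structures.
From mathcomp Require Import all_boot all_order all_algebra.
Set Implicit Arguments. Unset Strict Implicit. Unset Printing Implicit Defensive.
Import GRing.Theory.
Local Open Scope ring_scope.

Section SchurWeyl.
Variables (k : fieldType) (A B : algType k) (V : lmodType k).
Variables (actA : A -> V -> V) (actB : V -> B -> V).

Definition bimodule : Prop :=
  (forall a x u v, actA a (x *: u + v) = x *: actA a u + actA a v) /\
      (forall a b x v, actA (x *: a + b) v = x *: actA a v + actA b v) /\
      (forall v, actA 1 v = v) /\
      (forall a a' v, actA (a * a') v = actA a (actA a' v)) /\
      (forall b x u v, actB (x *: u + v) b = x *: actB u b + actB v b) /\
      (forall b c x v, actB v (x *: b + c) = x *: actB v b + actB v c) /\
      (forall v, actB v 1 = v) /\
      (forall b b' v, actB v (b * b') = actB (actB v b) b') /\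
      (forall a b v, actB (actA a v) b = actA a (actB v b)).

(** Subspaces of V and subsets of B are given as predicates; an endomorphism
    of the subspace W is represented by a function V -> V, only its values on
    W matter. *)
Definition k_endo (W : V -> Prop) (phi : V -> V) : Prop :=
  (forall v, W v -> W (phi v)) /\
  (forall x u v, W u -> W v -> phi (x *: u + v) = x *: phi u + phi v).

Definition right_linear (W : V -> Prop) (C : B -> Prop) (phi : V -> V) : Prop :=
  forall c v, C c -> W v -> phi (actB v c) = actB (phi v) c.

Definition left_linear (W : V -> Prop) (phi : V -> V) : Prop :=
  forall a v, W v -> phi (actA a v) = actA a (phi v).

Definition schur_weyl (W : V -> Prop) (C : B -> Prop) : Prop :=
  (forall phi, (k_endo W phi /\ right_linear W C phi) <->
               exists a : A, forall v, W v -> phi v = actA a v) /\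
  (forall psi, (k_endo W psi /\ left_linear W psi) <->
               exists2 c, C c & forall v, W v -> psi v = actB v c).

Definition fullV : V -> Prop := fun _ => True.
Definition fullB : B -> Prop := fun _ => True.

Definition Vcut (e : B) : V -> Prop := fun w => exists v, w = actB v e.
Definition corner (e : B) : B -> Prop := fun c => exists b, c = e * b * e.

Definition extends_property (e : B) : Prop :=
  forall phi, k_endo (Vcut e) phi -> right_linear (Vcut e) (corner e) phi ->
    exists psi, [/\ k_endo fullV psi, right_linear fullV fullB psi &
                    forall v, Vcut e v -> psi v = phi v].

End SchurWeyl.

(* Both Schur-Weyl duality for (A, Ve, eBe) and the extension property for e
   are equivalent to the single statement that every eBe-linear endomorphism
   of Ve is the action of an element of A: the remaining inclusions hold for
   any idempotent, because restricting the action of A, resp. precomposing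
   with v |-> ve and using End_A(V) = B, produces the required elements.
   That statement transfers between e and f, since right multiplication by f
   and by e are mutually inverse isomorphisms Ve <-> Vf intertwining the
   actions of eBe and fBf. *)
From HB Require Import structures.
From mathcomp Require Import all_boot all_order all_algebra.
Import GRing.Theory.
Local Open Scope ring_scope.

Section CornerDuality.
Context {k : fieldType} {A B : algType k} {V : lmodType k}.
Context {actA : A -> V -> V} {actB : V -> B -> V}.
Hypothesis hbim : bimodule actA actB.

Definition corner_endo_by_A (e : B) : Prop :=
  forall phi, k_endo (Vcut actB e) phi ->
    right_linear actB (Vcut actB e) (corner e) phi ->
  exists a : A, forall v, Vcut actB e v -> phi v = actA a v.

Lemma actA_linear a x u v : actA a (x *: u + v) = x *: actA a u + actA a v.
Proof. by case: hbim. Qed.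

Lemma actB_linear b x u v : actB (x *: u + v) b = x *: actB u b + actB v b.
Proof. by case: hbim => _ [_ [_ [_ [H _]]]]. Qed.

Lemma actB_mul b b' v : actB v (b * b') = actB (actB v b) b'.
Proof. by case: hbim => _ [_ [_ [_ [_ [_ [_ [H _]]]]]]]. Qed.

Lemma actBA a b v : actB (actA a v) b = actA a (actB v b).
Proof. by case: hbim => _ [_ [_ [_ [_ [_ [_ [_ H]]]]]]]. Qed.

Section Idempotent.
Context {e : B}.
Hypothesis he : e * e = e.

Lemma VcutP {w} : Vcut actB e w -> actB w e = w.
Proof. by case=> v ->; rewrite -actB_mul he. Qed.

Lemma Vcut_actB v : Vcut actB e (actB v e).
Proof. by exists v. Qed.

Lemma Vcut_linear x u v :
  Vcut actB e u -> Vcut actB e v -> Vcut actB e (x *: u + v).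
Proof. by case=> u0 -> [v0 ->]; exists (x *: u0 + v0); rewrite actB_linear. Qed.

Lemma Vcut_actA a w : Vcut actB e w -> Vcut actB e (actA a w).
Proof. by case=> v ->; exists (actA a v); rewrite actBA. Qed.

Lemma Vcut_corner c w : corner e c -> Vcut actB e (actB w c).
Proof. by case=> b ->; exists (actB w (e * b)); rewrite -actB_mul. Qed.

Lemma actA_corner_linear a :
  k_endo (Vcut actB e) (actA a) /\
  right_linear actB (Vcut actB e) (corner e) (actA a).
Proof.
split; last by move=> c v _ _; rewrite actBA.
by split=> [v|x u v _ _]; [apply: Vcut_actA | rewrite actA_linear].
Qed.

Lemma actB_corner_linear {c} : corner e c ->
  k_endo (Vcut actB e) (actB^~ c) /\ left_linear actA (Vcut actB e) (actB^~ c).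
Proof.
move=> ec; split; last by move=> a v _; rewrite actBA.
by split=> [v _|x u v _ _]; [apply: Vcut_corner | rewrite actB_linear].
Qed.

Hypothesis hSW : schur_weyl actA actB (@fullV k V) (@fullB k B).

(* Precomposing with [v |-> ve] turns [psi] into an A-linear endomorphism
   of V, i.e. the action of some [c]; on Ve, [psi] is then the action of
   [ece]. *)
Lemma left_linear_Vcut_corner psi :
  k_endo (Vcut actB e) psi -> left_linear actA (Vcut actB e) psi ->
  exists2 c, corner e c & forall v, Vcut actB e v -> psi v = actB v c.
Proof.
move=> [psi_cl psi_lin] psi_A.
pose Psi v := psi (actB v e).
have Psi_endo : k_endo (@fullV k V) Psi.
  split=> // x u v _ _.
  by rewrite /Psi actB_linear psi_lin //; apply: Vcut_actB.
have Psi_A : left_linear actA (@fullV k V) Psi.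
  by move=> a v _; rewrite /Psi actBA psi_A //; apply: Vcut_actB.
have [c _ Hc] := (proj2 hSW Psi).1 (conj Psi_endo Psi_A).
exists (e * c * e); first by exists c.
move=> w ew.
have psi_w : psi w = actB w c by rewrite -Hc // /Psi VcutP.
rewrite -(VcutP (psi_cl _ ew)) psi_w -actB_mul.
by rewrite -{1}(VcutP ew) -actB_mul !mulrA.
Qed.

Lemma schur_weyl_cornerE :
  schur_weyl actA actB (Vcut actB e) (corner e) <-> corner_endo_by_A e.
Proof.
split=> [[SWA _] phi phi_endo phi_B | HA]; first exact/(SWA phi).
split=> [phi | psi]; split.
- by case=> phi_endo phi_B; apply: HA.
- case=> a Ha; have [[cl lin] rl] := actA_corner_linear a.
  split; first split.
  + by move=> v ev; rewrite Ha //; apply: cl.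
  + by move=> x u v eu ev; rewrite !Ha ?lin //; apply: Vcut_linear.
  + by move=> c v ec ev; rewrite !Ha ?rl //; apply: Vcut_corner.
- by case=> psi_endo psi_A; apply: left_linear_Vcut_corner.
- case=> c ec Hc; have [[cl lin] ll] := actB_corner_linear ec.
  split; first split.
  + by move=> v ev; rewrite Hc //; apply: cl.
  + by move=> x u v eu ev; rewrite !Hc ?lin //; apply: Vcut_linear.
  + by move=> a v ev; rewrite !Hc ?ll //; apply: Vcut_actA.
Qed.

End Idempotent.

Lemma extends_propertyE e :
  schur_weyl actA actB (@fullV k V) (@fullB k B) ->
  extends_property actB e <-> corner_endo_by_A e.
Proof.
move=> [SWA _]; split=> [Hext phi phi_endo phi_B | HA phi phi_endo phi_B].
  have [psi [psi_endo psi_B psi_phi]] := Hext phi phi_endo phi_B.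
  have [a Ha] := (SWA psi).1 (conj psi_endo psi_B).
  by exists a => v ev; rewrite -psi_phi // Ha.
have [a Ha] := HA phi phi_endo phi_B.
exists (actA a); split=> //.
- by split=> // x u v _ _; rewrite actA_linear.
- by move=> c v _ _; rewrite actBA.
- by move=> v ev; rewrite Ha.
Qed.

Section Transfer.
Context {e f : B}.
Hypotheses (he : e * e = e) (hf : f * f = f).
Hypotheses (hef : e * f = f) (hfe : f * e = e).

Lemma Vcut_actB_actB u : Vcut actB f u -> actB (actB u e) f = u.
Proof. by move=> fu; rewrite -actB_mul hef VcutP. Qed.

(* [phi] on Vf is conjugated to [w |-> phi (w f) e] on Ve. *)
Lemma corner_endo_by_A_transfer :
  corner_endo_by_A e -> corner_endo_by_A f.
Proof.
move=> HA phi [phi_cl phi_lin] phi_B.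
pose phi' w := actB (phi (actB w f)) e.
have phi'_endo : k_endo (Vcut actB e) phi'.
  split=> [v _|x u v _ _]; first exact: Vcut_actB.
  by rewrite /phi' actB_linear phi_lin ?actB_linear //; apply: Vcut_actB.
have phi'_B : right_linear actB (Vcut actB e) (corner e) phi'.
  move=> c w [b ->] _; rewrite /phi'.
  have -> : actB (actB w (e * b * e)) f = actB (actB w f) (e * b * e * f).
    by rewrite -!actB_mul !mulrA hfe.
  rewrite phi_B; last exact: Vcut_actB.
    by rewrite -!actB_mul -!mulrA hfe he !mulrA he.
  by exists (e * b * e * f); rewrite !mulrA hfe -(mulrA _ f f) hf.
have [a Ha] := HA phi' phi'_endo phi'_B.
exists a => u fu.
rewrite -(VcutP hf (phi_cl _ fu)) -hef actB_mul.
have -> : actB (phi u) e = phi' (actB u e) by rewrite /phi' Vcut_actB_actB.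
by rewrite Ha ?actBA ?Vcut_actB_actB //; apply: Vcut_actB.
Qed.

End Transfer.

End CornerDuality.

Theorem mainTheorem8 (k : fieldType) (A B : algType k) (V : lmodType k)
    (actA : A -> V -> V) (actB : V -> B -> V)
    (hbim : bimodule actA actB)
    (hSW : schur_weyl actA actB (@fullV k V) (@fullB k B))
    (e f : B) (he : e * e = e) (hf : f * f = f)
    (hVe : exists v, actB v e <> 0)
    (hef : e * f = f) (hfe : f * e = e) :
  [<-> schur_weyl actA actB (Vcut actB e) (corner e);
       extends_property actB e;
       schur_weyl actA actB (Vcut actB f) (corner f);
       extends_property actB f].
Proof.
have SWe := schur_weyl_cornerE hbim he hSW.
have SWf := schur_weyl_cornerE hbim hf hSW.
have Ext e' := extends_propertyE hbim e' hSW.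
have e_to_f := corner_endo_by_A_transfer hbim he hf hef hfe.
have f_to_e := corner_endo_by_A_transfer hbim hf he hfe hef.
tfae.
- by move/SWe/(Ext e).2.
- by move/(Ext e).1/e_to_f/SWf.
- by move/SWf/(Ext f).2.
- by move/(Ext f).1/f_to_e/SWe.
Qed.
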